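(* Let $G\subset\mathrm{SU}(2)$ be a finite nontrivial subgroup, $H=P(G)$, and let $f$ be an $H$-invariant Morse–Smale function on $S^2$ whose critical set equals the fixed-point set $\mathrm{Fix}(H)=\{p\in S^2: |H_p|>1\}$. Let $\varepsilon>0$ be small, $p$ a critical point of $f$, and $\gamma_p$ the embedded Reeb orbit of $\lambda_\varepsilon$ over $p$ (namely $t\mapsto e^{it/(1+\varepsilon f(p))}z$, $t\in[0,2\pi(1+\varepsilon f(p))]$, $z\in\mathfrak{P}^{-1}(p)$). Then the multiplicity of the Reeb orbit $\pi_G\circ\gamma_p$ of $\lambda_{G,\varepsilon}$ is $2|H_p|$ if $|G|$ is even, and $|H_p|$ if $|G|$ is odd.
   Context: $S^3\subset\mathbb{C}^2$ with $\lambda=\frac12\sum(x_kdy_k-y_kdx_k)|_{S^3}$; $\mathfrak{P}:S^3\to S^2$ the Hopf fibration; $P:\mathrm{SU}(2)\to\mathrm{SO}(3)$ the standard double cover (kernel $\{\pm\mathrm{Id}\}$); $H$ acts on $S^2$ by rotations, $H_p$ is the isotropy subgroup of $p$. $\lambda_\varepsilon=((1+\varepsilon f)\circ\mathfrak{P})\lambda$; $\pi_G:S^3\to S^3/G$ the quotient; $\lambda_{G,\varepsilon}$ is the contact form on $S^3/G$ with $\pi_G^*\lambda_{G,\varepsilon}=\lambda_\varepsilon$ (well defined since $f$ is $H$-invariant). The multiplicity of a Reeb orbit is the integer $m$ such that it is the $m$-fold iterate of an embedded Reeb orbit. *)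

From Stdlib Require Import Reals List Arith.
From Coquelicot Require Import Coquelicot.
Open Scope R_scope.

Definition C2 : Type := (C * C)%type.
Definition R3 : Type := (R * R * R)%type.

Definition cunit_sphere (z : C2) : Prop :=
  Cmod (fst z) ^ 2 + Cmod (snd z) ^ 2 = 1.

Definition dot3 (x y : R3) : R :=
  let '(x1, x2, x3) := x in let '(y1, y2, y3) := y in x1*y1 + x2*y2 + x3*y3.
Definition sphere2 (x : R3) : Prop := dot3 x x = 1.
Definition add3 (x y : R3) : R3 :=
  let '(x1, x2, x3) := x in let '(y1, y2, y3) := y in (x1+y1, x2+y2, x3+y3).
Definition scal3 (a : R) (x : R3) : R3 :=
  let '(x1, x2, x3) := x in (a*x1, a*x2, a*x3).

(** 2x2 complex matrices ((a, b), (c, d)) = [[a, b], [c, d]]. *)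
Definition Mat2 : Type := ((C * C) * (C * C))%type.
Definition mat_id : Mat2 := ((RtoC 1, RtoC 0), (RtoC 0, RtoC 1)).
Definition mat_mul (M N : Mat2) : Mat2 :=
  let '((a, b), (c, d)) := M in let '((a', b'), (c', d')) := N in
  ((Cplus (Cmult a a') (Cmult b c'), Cplus (Cmult a b') (Cmult b d')),
   (Cplus (Cmult c a') (Cmult d c'), Cplus (Cmult c b') (Cmult d d'))).
Definition mat_adj (M : Mat2) : Mat2 :=
  let '((a, b), (c, d)) := M in ((Cconj a, Cconj c), (Cconj b, Cconj d)).
Definition mat_det (M : Mat2) : C :=
  let '((a, b), (c, d)) := M in Cminus (Cmult a d) (Cmult b c).
Definition mat_vec (M : Mat2) (z : C2) : C2 :=
  let '((a, b), (c, d)) := M in let '(z1, z2) := z in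
  (Cplus (Cmult a z1) (Cmult b z2), Cplus (Cmult c z1) (Cmult d z2)).

Definition SU2 (g : Mat2) : Prop :=
  mat_mul (mat_adj g) g = mat_id /\ mat_det g = RtoC 1.

Definition card_is {T : Type} (A : T -> Prop) (n : nat) : Prop :=
  exists l : list T, NoDup l /\ (forall x, A x <-> In x l) /\ length l = n.

Definition finite_subgroup_SU2 (G : Mat2 -> Prop) : Prop :=
  (forall g, G g -> SU2 g) /\ G mat_id /\
  (forall g h, G g -> G h -> G (mat_mul g h)) /\
  (forall g, G g -> exists h, G h /\ mat_mul g h = mat_id) /\
  (exists n, card_is G n).

(** Identification R^3 = traceless Hermitian 2x2 matrices,
    x |-> [[x3, x1 - i x2], [x1 + i x2, -x3]]. *)
Definition herm (x : R3) : Mat2 :=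
  let '(x1, x2, x3) := x in
  ((RtoC x3, (x1, - x2)), ((x1, x2), RtoC (- x3))).
Definition vec_of_herm (M : Mat2) : R3 :=
  let '((a, b), (c, d)) := M in (Re c, Im c, Re a).

(** The standard double cover P : SU(2) -> SO(3), P(g) x = g X g^*. *)
Definition P (g : Mat2) : R3 -> R3 :=
  fun x => vec_of_herm (mat_mul (mat_mul g (herm x)) (mat_adj g)).

(** Hopf fibration S^3 -> S^2, z |-> 2 z z^* - Id (as a traceless Hermitian
    matrix); it satisfies hopf (g z) = P g (hopf z). *)
Definition hopf (z : C2) : R3 :=
  let '(z1, z2) := z in
  let outer : Mat2 := ((Cmult z1 (Cconj z1), Cmult z1 (Cconj z2)),
                       (Cmult z2 (Cconj z1), Cmult z2 (Cconj z2))) in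
  let '((a, b), (c, d)) := outer in
  vec_of_herm ((Cminus (Cmult (RtoC 2) a) (RtoC 1), Cmult (RtoC 2) b),
               (Cmult (RtoC 2) c, Cminus (Cmult (RtoC 2) d) (RtoC 1))).

(** Isotropy subgroup H_p of H = P(G) at p (elements are rotations). *)
Definition isotropy (G : Mat2 -> Prop) (p : R3) (r : R3 -> R3) : Prop :=
  exists g, G g /\ r = P g /\ r p = p.

Definition FixH (G : Mat2 -> Prop) (p : R3) : Prop :=
  sphere2 p /\ exists n, card_is (isotropy G p) n /\ (n > 1)%nat.

Definition sphere_critical (f : R3 -> R) (p : R3) : Prop :=
  sphere2 p /\
  forall v : R3, sphere2 v -> dot3 v p = 0 ->
    is_derive (fun t => f (add3 (scal3 (cos t) p) (scal3 (sin t) v))) 0 0.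

Definition rotC2 (s : R) (z : C2) : C2 :=
  let '(z1, z2) := z in (Cmult (cos s, sin s) z1, Cmult (cos s, sin s) z2).

(** The quotient map pi_G : S^3 -> S^3/G, a point of S^3/G being a G-orbit. *)
Definition piG (G : Mat2 -> Prop) (z : C2) : C2 -> Prop :=
  fun w => exists g, G g /\ w = mat_vec g z.

(** The closed orbit (x, T) (x of period T) has multiplicity m: it is the
    m-fold iterate of the embedded closed orbit (x, T/m), i.e. T/m is a period
    of x and x is injective on [0, T/m). *)
Definition multiplicity {X : Type} (x : R -> X) (T : R) (m : nat) : Prop :=
  (m > 0)%nat /\
  (forall t, x (t + T / INR m) = x t) /\
  (forall s t, 0 <= s < T / INR m -> 0 <= t < T / INR m -> x s = x t -> s = t).

(* Let K be the set of g in G mapping the Hopf circle through z to itself.  K acts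
   freely on that circle by rotations, so the angles t with e^{it} z in G z form a
   lattice (2 pi / N) Z: K is cyclic of order N, generated by the element of
   smallest positive angle, and the orbit t |-> [e^{it} z] in S^3/G first closes up
   at time 2 pi / N, i.e. it has multiplicity |K|.  The double cover P maps K onto
   H_p, and its kernel {1, -1} lies in K exactly when -1 lies in G (-1 acts as
   e^{i pi}).  Pairing g with g^{-1}, and since only 1 and -1 are self-inverse in
   SU(2), -1 lies in G iff |G| is even.  Hence |K| = 2 |H_p| or |H_p|.  The factor
   1 + eps f(p) only rescales time. *)
From Stdlib Require Import Reals List Arith.
From Stdlib Require Import Lra Lia ZArith.
From Stdlib Require Import Classical ClassicalEpsilon FunctionalExtensionality PropExtensionality.
From Coquelicot Require Import Coquelicot.
Open Scope R_scope.

(* [[a, b], [-conj b, conj a]] with a = a1 + i a2 and b = b1 + i b2. *)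
Definition su2_mat (a1 a2 b1 b2 : R) : Mat2 :=
  (((a1, a2), (b1, b2)), ((- b1, b2), (a1, - a2))).

Definition mat_neg_id : Mat2 := ((RtoC (-1), RtoC 0), (RtoC 0, RtoC (-1))).

Definition mat_pow (g : Mat2) (n : nat) : Mat2 := Nat.iter n (mat_mul g) mat_id.

Definition sqnorm2 (w : C2) : R :=
  let '((x1, x2), (y1, y2)) := w in x1 * x1 + x2 * x2 + y1 * y1 + y2 * y2.

Ltac unfold_C2 :=
  unfold mat_vec, mat_mul, mat_adj, mat_det, mat_id, mat_neg_id, su2_mat, rotC2,
    P, herm, vec_of_herm, hopf, Cmult, Cplus, Cminus, Copp, Cconj, RtoC, Re, Im in *;
  simpl in *; cbn [fst snd] in *.

Ltac split_pairs := repeat (apply pair_equal_spec; split); cbn [fst snd].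

Ltac destruct_pair_eqs :=
  repeat match goal with H : (_, _) = (_, _) |- _ => apply pair_equal_spec in H; destruct H end.

Lemma SU2_decomp g : SU2 g ->
  exists a1 a2 b1 b2, g = su2_mat a1 a2 b1 b2 /\ a1 * a1 + a2 * a2 + b1 * b1 + b2 * b2 = 1.
Proof.
  destruct g as [[a b] [c d]]. intros [Hu Hdet].
  unfold mat_mul, mat_adj, mat_det, mat_id in *.
  apply pair_equal_spec in Hu as [Hu1 _].
  apply pair_equal_spec in Hu1 as [e11 e12].
  assert (Hd : Cconj a = d).
  { apply Ceq_minus.
    transitivity (- (Cconj a) * (a * d - b * c - 1) + (Cconj a * a + Cconj c * c - 1) * d
                  - c * (Cconj a * b + Cconj c * d))%C; [ring|].
    rewrite Hdet, e11, e12. ring. }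
  assert (Hc : Cconj c = Copp b).
  { apply Ceq_minus.
    transitivity (- (Cconj c) * (a * d - b * c - 1) + a * (Cconj a * b + Cconj c * d)
                  - b * (Cconj a * a + Cconj c * c - 1))%C; [ring|].
    rewrite Hdet, e11, e12. ring. }
  subst d. destruct a as [a1 a2], b as [b1 b2], c as [c1 c2].
  exists a1, a2, b1, b2. unfold_C2. destruct_pair_eqs.
  split; [split_pairs; lra | nra].
Qed.

Lemma mat_mul_assoc g h k : mat_mul (mat_mul g h) k = mat_mul g (mat_mul h k).
Proof.
  destruct g as [[[a1 a2] [b1 b2]] [[c1 c2] [d1 d2]]].
  destruct h as [[[e1 e2] [f1 f2]] [[g1 g2] [h1 h2]]].
  destruct k as [[[x1 x2] [y1 y2]] [[u1 u2] [v1 v2]]]. unfold_C2. split_pairs; ring.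
Qed.

Lemma mat_mul_1l g : mat_mul mat_id g = g.
Proof. destruct g as [[[a1 a2] [b1 b2]] [[c1 c2] [d1 d2]]]. unfold_C2. split_pairs; ring. Qed.

Lemma mat_mul_1r g : mat_mul g mat_id = g.
Proof. destruct g as [[[a1 a2] [b1 b2]] [[c1 c2] [d1 d2]]]. unfold_C2. split_pairs; ring. Qed.

Lemma mat_adjK g : mat_adj (mat_adj g) = g.
Proof. destruct g as [[[a1 a2] [b1 b2]] [[c1 c2] [d1 d2]]]. unfold_C2. split_pairs; ring. Qed.

Lemma SU2_mul_adj_l g : SU2 g -> mat_mul (mat_adj g) g = mat_id.
Proof. intros [H _]. exact H. Qed.

Lemma SU2_mul_adj_r g : SU2 g -> mat_mul g (mat_adj g) = mat_id.
Proof.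
  intro H. destruct (SU2_decomp g H) as (a1 & a2 & b1 & b2 & -> & N).
  unfold_C2. split_pairs; nra.
Qed.

Lemma SU2_adj_eq_self g : SU2 g -> mat_adj g = g -> g = mat_id \/ g = mat_neg_id.
Proof.
  intros H E. destruct (SU2_decomp g H) as (a1 & a2 & b1 & b2 & -> & N).
  unfold_C2. destruct_pair_eqs.
  assert (a2 = 0) by lra. assert (b1 = 0) by lra. assert (b2 = 0) by lra. subst.
  assert (Ha : (a1 - 1) * (a1 + 1) = 0) by lra.
  destruct (Rmult_integral _ _ Ha); [left | right]; split_pairs; lra.
Qed.

Lemma SU2_neg_id_mul_neq g : SU2 g -> mat_mul mat_neg_id g <> g.
Proof.
  intros H E. destruct (SU2_decomp g H) as (a1 & a2 & b1 & b2 & -> & N).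
  unfold_C2. destruct_pair_eqs. nra.
Qed.

Lemma mat_vec_mul g h w : mat_vec (mat_mul g h) w = mat_vec g (mat_vec h w).
Proof.
  destruct g as [[[a1 a2] [b1 b2]] [[c1 c2] [d1 d2]]].
  destruct h as [[[e1 e2] [f1 f2]] [[g1 g2] [h1 h2]]].
  destruct w as [[x1 x2] [y1 y2]]. unfold_C2. split_pairs; ring.
Qed.

Lemma mat_vec_id w : mat_vec mat_id w = w.
Proof. destruct w as [[x1 x2] [y1 y2]]. unfold_C2. split_pairs; ring. Qed.

Lemma SU2_mat_vec_adj g w : SU2 g -> mat_vec (mat_adj g) (mat_vec g w) = w.
Proof. intro H. rewrite <- mat_vec_mul, SU2_mul_adj_l by exact H. apply mat_vec_id. Qed.

Lemma unit_sqnorm2 z : cunit_sphere z -> sqnorm2 z = 1.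
Proof.
  destruct z as [[x1 x2] [y1 y2]]. unfold cunit_sphere, Cmod, sqnorm2. cbn [fst snd].
  rewrite !pow2_sqrt by nra. lra.
Qed.

Lemma SU2_sqnorm2 g w : SU2 g -> sqnorm2 (mat_vec g w) = sqnorm2 w.
Proof.
  intro H. destruct (SU2_decomp g H) as (a1 & a2 & b1 & b2 & -> & N).
  destruct w as [[x1 x2] [y1 y2]]. unfold sqnorm2. unfold_C2.
  transitivity ((a1 * a1 + a2 * a2 + b1 * b1 + b2 * b2)
                * (x1 * x1 + x2 * x2 + y1 * y1 + y2 * y2)); [ring|].
  rewrite N. ring.
Qed.

(* Each coordinate of g - h is a combination of the four real equations
   (g - h) z = 0 with the coordinates of z as coefficients. *)
Lemma SU2_action_free g h z :
  SU2 g -> SU2 h -> sqnorm2 z = 1 -> mat_vec g z = mat_vec h z -> g = h.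
Proof.
  intros Hg Hh Nz E.
  destruct (SU2_decomp g Hg) as (a1 & a2 & b1 & b2 & -> & _).
  destruct (SU2_decomp h Hh) as (c1 & c2 & d1 & d2 & -> & _).
  destruct z as [[x1 x2] [y1 y2]]. unfold sqnorm2 in Nz. unfold_C2. destruct_pair_eqs.
  set (p1 := a1 - c1). set (p2 := a2 - c2). set (q1 := b1 - d1). set (q2 := b2 - d2).
  assert (F1 : p1 * x1 - p2 * x2 + q1 * y1 - q2 * y2 = 0) by (unfold p1, p2, q1, q2; lra).
  assert (F2 : p1 * x2 + p2 * x1 + q1 * y2 + q2 * y1 = 0) by (unfold p1, p2, q1, q2; lra).
  assert (F3 : - q1 * x1 - q2 * x2 + p1 * y1 + p2 * y2 = 0) by (unfold p1, p2, q1, q2; lra).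
  assert (F4 : - q1 * x2 + q2 * x1 + p1 * y2 - p2 * y1 = 0) by (unfold p1, p2, q1, q2; lra).
  assert (Hp1 : p1 = 0).
  { transitivity (x1 * (p1 * x1 - p2 * x2 + q1 * y1 - q2 * y2)
      + x2 * (p1 * x2 + p2 * x1 + q1 * y2 + q2 * y1)
      + y1 * (- q1 * x1 - q2 * x2 + p1 * y1 + p2 * y2)
      + y2 * (- q1 * x2 + q2 * x1 + p1 * y2 - p2 * y1)); [|rewrite F1, F2, F3, F4; ring].
    transitivity (p1 * (x1 * x1 + x2 * x2 + y1 * y1 + y2 * y2)); [rewrite Nz|]; ring. }
  assert (Hp2 : p2 = 0).
  { transitivity (- x2 * (p1 * x1 - p2 * x2 + q1 * y1 - q2 * y2)
      + x1 * (p1 * x2 + p2 * x1 + q1 * y2 + q2 * y1)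
      + y2 * (- q1 * x1 - q2 * x2 + p1 * y1 + p2 * y2)
      - y1 * (- q1 * x2 + q2 * x1 + p1 * y2 - p2 * y1)); [|rewrite F1, F2, F3, F4; ring].
    transitivity (p2 * (x1 * x1 + x2 * x2 + y1 * y1 + y2 * y2)); [rewrite Nz|]; ring. }
  assert (Hq1 : q1 = 0).
  { transitivity (y1 * (p1 * x1 - p2 * x2 + q1 * y1 - q2 * y2)
      + y2 * (p1 * x2 + p2 * x1 + q1 * y2 + q2 * y1)
      - x1 * (- q1 * x1 - q2 * x2 + p1 * y1 + p2 * y2)
      - x2 * (- q1 * x2 + q2 * x1 + p1 * y2 - p2 * y1)); [|rewrite F1, F2, F3, F4; ring].
    transitivity (q1 * (x1 * x1 + x2 * x2 + y1 * y1 + y2 * y2)); [rewrite Nz|]; ring. }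
  assert (Hq2 : q2 = 0).
  { transitivity (- y2 * (p1 * x1 - p2 * x2 + q1 * y1 - q2 * y2)
      + y1 * (p1 * x2 + p2 * x1 + q1 * y2 + q2 * y1)
      - x2 * (- q1 * x1 - q2 * x2 + p1 * y1 + p2 * y2)
      + x1 * (- q1 * x2 + q2 * x1 + p1 * y2 - p2 * y1)); [|rewrite F1, F2, F3, F4; ring].
    transitivity (q2 * (x1 * x1 + x2 * x2 + y1 * y1 + y2 * y2)); [rewrite Nz|]; ring. }
  unfold p1, p2, q1, q2 in *. split_pairs; lra.
Qed.

(** * The circle action and the Hopf fibration *)

Lemma rotC2_add a b w : rotC2 a (rotC2 b w) = rotC2 (a + b) w.
Proof.
  destruct w as [[x1 x2] [y1 y2]]. unfold_C2. rewrite cos_plus, sin_plus. split_pairs; ring.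
Qed.

Lemma rotC2_0 w : rotC2 0 w = w.
Proof. destruct w as [[x1 x2] [y1 y2]]. unfold_C2. rewrite cos_0, sin_0. split_pairs; ring. Qed.

Lemma rotC2_add_2PI_mul t k w : rotC2 (t + IZR k * (2 * PI)) w = rotC2 t w.
Proof.
  rewrite Rplus_comm, <- rotC2_add.
  assert (Hs : sin (IZR k * (2 * PI)) = 0)
    by (apply sin_eq_0_1; exists (2 * k)%Z; rewrite mult_IZR; ring).
  assert (Hc : cos (IZR k * (2 * PI)) = 1).
  { replace (IZR k * (2 * PI)) with (2 * (IZR k * PI)) by ring.
    rewrite cos_2a_sin, sin_eq_0_1 by (exists k; reflexivity). ring. }
  destruct (rotC2 t w) as [[x1 x2] [y1 y2]]. unfold_C2. rewrite Hs, Hc. split_pairs; ring.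
Qed.

Lemma rotC2_IZR_mul_mod k n d w : (0 < n)%Z -> IZR n * d = 2 * PI ->
  rotC2 (IZR k * d) w = rotC2 (IZR (k mod n) * d) w.
Proof.
  intros Hn Hnd. rewrite (Z.div_mod k n) at 1 by lia. rewrite plus_IZR, mult_IZR.
  replace ((IZR n * IZR (k / n) + IZR (k mod n)) * d)
    with (IZR (k mod n) * d + IZR (k / n) * (2 * PI)) by (rewrite <- Hnd; ring).
  apply rotC2_add_2PI_mul.
Qed.

Lemma mat_vec_rotC2 g t w : mat_vec g (rotC2 t w) = rotC2 t (mat_vec g w).
Proof.
  destruct g as [[[a1 a2] [b1 b2]] [[c1 c2] [d1 d2]]].
  destruct w as [[x1 x2] [y1 y2]]. unfold_C2. split_pairs; ring.
Qed.

Lemma mat_vec_neg_id w : mat_vec mat_neg_id w = rotC2 PI w.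
Proof. destruct w as [[x1 x2] [y1 y2]]. unfold_C2. rewrite cos_PI, sin_PI. split_pairs; ring. Qed.

Lemma mat_vec_pow g d w n :
  mat_vec g w = rotC2 d w -> mat_vec (mat_pow g n) w = rotC2 (INR n * d) w.
Proof.
  intro Hg. induction n as [|n IH].
  - change (INR 0) with 0. rewrite Rmult_0_l, rotC2_0. apply mat_vec_id.
  - unfold mat_pow. simpl Nat.iter. fold (mat_pow g n).
    rewrite mat_vec_mul, IH, mat_vec_rotC2, Hg, rotC2_add, S_INR. f_equal. ring.
Qed.

Lemma cos_sin_eq_2PI_mul s t :
  cos s = cos t -> sin s = sin t -> exists k, s - t = IZR k * (2 * PI).
Proof.
  intros Hc Hs.
  assert (Hcos : cos (s - t) = 1).
  { rewrite cos_minus, Hc, Hs. pose proof (sin2_cos2 t) as E. unfold Rsqr in E. lra. }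
  pose proof (cos_2a_sin ((s - t) / 2)) as E. replace (2 * ((s - t) / 2)) with (s - t) in E by field.
  assert (Hsin : sin ((s - t) / 2) = 0) by nra.
  destruct (sin_eq_0_0 _ Hsin) as [k Hk]. exists k. lra.
Qed.

Lemma rotC2_inj_mod s t z :
  sqnorm2 z = 1 -> rotC2 s z = rotC2 t z -> exists k, s - t = IZR k * (2 * PI).
Proof.
  destruct z as [[x1 x2] [y1 y2]]. unfold sqnorm2. intros N E. unfold_C2. destruct_pair_eqs.
  set (p := cos s - cos t). set (q := sin s - sin t).
  assert (F1 : p * x1 - q * x2 = 0) by (unfold p, q; lra).
  assert (F2 : p * x2 + q * x1 = 0) by (unfold p, q; lra).
  assert (F3 : p * y1 - q * y2 = 0) by (unfold p, q; lra).
  assert (F4 : p * y2 + q * y1 = 0) by (unfold p, q; lra).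
  assert (Hpq : p * p + q * q = 0).
  { transitivity ((p * x1 - q * x2) * (p * x1 - q * x2) + (p * x2 + q * x1) * (p * x2 + q * x1)
      + (p * y1 - q * y2) * (p * y1 - q * y2) + (p * y2 + q * y1) * (p * y2 + q * y1));
      [|rewrite F1, F2, F3, F4; ring].
    transitivity ((p * p + q * q) * (x1 * x1 + x2 * x2 + y1 * y1 + y2 * y2)); [rewrite N|]; ring. }
  assert (Hp : p = 0) by nra. assert (Hq : q = 0) by nra.
  apply cos_sin_eq_2PI_mul; unfold p, q in Hp, Hq; lra.
Qed.

Lemma rotC2_inj_near s t z :
  sqnorm2 z = 1 -> Rabs (s - t) < 2 * PI -> rotC2 s z = rotC2 t z -> s = t.
Proof.
  intros Nz Hst E. destruct (rotC2_inj_mod s t z Nz E) as [k Hk]. pose proof PI_RGT_0.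
  rewrite Hk, Rabs_mult, (Rabs_right (2 * PI)) in Hst by lra.
  assert (Hk1 : Rabs (IZR k) < 1) by nra.
  apply Rabs_def2 in Hk1 as [Hk1 Hk2].
  assert (k = 0%Z) by (apply lt_IZR in Hk1; apply (lt_IZR (-1)) in Hk2; lia).
  subst k. lra.
Qed.

Definition hopf_real (w : C2) : R3 :=
  let '((x1, x2), (y1, y2)) := w in
  (2 * (y1 * x1 + y2 * x2), 2 * (y2 * x1 - y1 * x2), x1 * x1 + x2 * x2 - y1 * y1 - y2 * y2).

Lemma hopf_eq_real w : sqnorm2 w = 1 -> hopf w = hopf_real w.
Proof. destruct w as [[x1 x2] [y1 y2]]. unfold sqnorm2, hopf_real. intro N. unfold_C2. split_pairs; lra. Qed.

Lemma P_hopf_real g w : SU2 g -> P g (hopf_real w) = hopf_real (mat_vec g w).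
Proof.
  intro H. destruct (SU2_decomp g H) as (a1 & a2 & b1 & b2 & -> & N).
  destruct w as [[x1 x2] [y1 y2]]. unfold hopf_real. unfold_C2. split_pairs; ring.
Qed.

Lemma hopf_real_rotC2 t w : hopf_real (rotC2 t w) = hopf_real w.
Proof.
  destruct w as [[x1 x2] [y1 y2]]. unfold hopf_real. unfold_C2.
  pose proof (sin2_cos2 t) as E. unfold Rsqr in E.
  split_pairs; match goal with |- ?L = ?R =>
    transitivity ((sin t * sin t + cos t * cos t) * R); [ring | rewrite E; ring] end.
Qed.

Lemma cos_sin_surj l1 l2 : l1 * l1 + l2 * l2 = 1 -> exists t, cos t = l1 /\ sin t = l2.
Proof.
  intro N. assert (B : -1 <= l1 <= 1) by nra.
  destruct (Rle_or_lt 0 l2) as [Hp | Hn].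
  - exists (acos l1). split; [apply cos_acos; exact B|].
    rewrite sin_acos by exact B. replace (1 - l1²) with (l2 * l2) by (unfold Rsqr; lra).
    apply sqrt_square. exact Hp.
  - exists (- acos l1). rewrite cos_neg, sin_neg. split; [apply cos_acos; exact B|].
    rewrite sin_acos by exact B. replace (1 - l1²) with (- l2 * - l2) by (unfold Rsqr; lra).
    rewrite sqrt_square; lra.
Qed.

(* The factor is the Hermitian product <w, z>. *)
Lemma hopf_real_eq_unit_multiple w z :
  sqnorm2 w = 1 -> sqnorm2 z = 1 -> hopf_real w = hopf_real z ->
  exists l1 l2, l1 * l1 + l2 * l2 = 1 /\ w = (Cmult (l1, l2) (fst z), Cmult (l1, l2) (snd z)).
Proof.
  destruct w as [[u1 u2] [v1 v2]], z as [[x1 x2] [y1 y2]]. unfold sqnorm2, hopf_real.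
  intros Nw Nz E. destruct_pair_eqs.
  set (D1 := (y1 * x1 + y2 * x2) - (v1 * u1 + v2 * u2)).
  set (D2 := (y2 * x1 - y1 * x2) - (v2 * u1 - v1 * u2)).
  set (D3 := (x1 * x1 + x2 * x2) - (u1 * u1 + u2 * u2)).
  assert (Z1 : D1 = 0) by (unfold D1; lra).
  assert (Z2 : D2 = 0) by (unfold D2; lra).
  assert (Z3 : D3 = 0) by (unfold D3; lra).
  set (l1 := u1 * x1 + u2 * x2 + v1 * y1 + v2 * y2).
  set (l2 := - u1 * x2 + u2 * x1 - v1 * y2 + v2 * y1).
  assert (Eu1 : l1 * x1 - l2 * x2 = u1).
  { transitivity (u1 + u1 * D3 + v1 * D1 + v2 * D2 + u1 * (u1 * u1 + u2 * u2 + v1 * v1 + v2 * v2 - 1));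
      [unfold l1, l2, D1, D2, D3; ring | rewrite Z1, Z2, Z3, Nw; ring]. }
  assert (Eu2 : l1 * x2 + l2 * x1 = u2).
  { transitivity (u2 + u2 * D3 + v2 * D1 - v1 * D2 + u2 * (u1 * u1 + u2 * u2 + v1 * v1 + v2 * v2 - 1));
      [unfold l1, l2, D1, D2, D3; ring | rewrite Z1, Z2, Z3, Nw; ring]. }
  assert (Ev1 : l1 * y1 - l2 * y2 = v1).
  { transitivity (v1 + u1 * D1 - u2 * D2 + v1 * ((x1 * x1 + x2 * x2 + y1 * y1 + y2 * y2 - 1)
      - (u1 * u1 + u2 * u2 + v1 * v1 + v2 * v2 - 1) - D3) + v1 * (u1 * u1 + u2 * u2 + v1 * v1 + v2 * v2 - 1));
      [unfold l1, l2, D1, D2, D3; ring | rewrite Z1, Z2, Z3, Nw, Nz; ring]. }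
  assert (Ev2 : l1 * y2 + l2 * y1 = v2).
  { transitivity (v2 + u2 * D1 + u1 * D2 + v2 * ((x1 * x1 + x2 * x2 + y1 * y1 + y2 * y2 - 1)
      - (u1 * u1 + u2 * u2 + v1 * v1 + v2 * v2 - 1) - D3) + v2 * (u1 * u1 + u2 * u2 + v1 * v1 + v2 * v2 - 1));
      [unfold l1, l2, D1, D2, D3; ring | rewrite Z1, Z2, Z3, Nw, Nz; ring]. }
  clearbody l1 l2. clear D1 D2 D3 Z1 Z2 Z3.
  assert (Nl : l1 * l1 + l2 * l2 = 1).
  { transitivity ((l1 * l1 + l2 * l2) * (x1 * x1 + x2 * x2 + y1 * y1 + y2 * y2));
      [rewrite Nz; ring|].
    transitivity ((l1 * x1 - l2 * x2) * (l1 * x1 - l2 * x2) + (l1 * x2 + l2 * x1) * (l1 * x2 + l2 * x1)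
      + (l1 * y1 - l2 * y2) * (l1 * y1 - l2 * y2) + (l1 * y2 + l2 * y1) * (l1 * y2 + l2 * y1));
      [ring|].
    rewrite Eu1, Eu2, Ev1, Ev2. lra. }
  exists l1, l2. split; [exact Nl|]. unfold Cmult. cbn [fst snd]. split_pairs; lra.
Qed.

Lemma hopf_real_fiber w z :
  sqnorm2 w = 1 -> sqnorm2 z = 1 -> hopf_real w = hopf_real z -> exists t, w = rotC2 t z.
Proof.
  intros Nw Nz E. destruct (hopf_real_eq_unit_multiple w z Nw Nz E) as (l1 & l2 & Nl & ->).
  destruct (cos_sin_surj l1 l2 Nl) as [t [Ct St]].
  exists t. destruct z as [z1 z2]. unfold rotC2. rewrite Ct, St. reflexivity.
Qed.

(** * The double cover P *)

Lemma vec4_eq_or_opp a1 a2 a3 a4 b1 b2 b3 b4 :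
  a1 * a1 + a2 * a2 + a3 * a3 + a4 * a4 = 1 ->
  a1 * a1 = b1 * b1 -> a2 * a2 = b2 * b2 -> a3 * a3 = b3 * b3 -> a4 * a4 = b4 * b4 ->
  a1 * a2 = b1 * b2 -> a1 * a3 = b1 * b3 -> a1 * a4 = b1 * b4 ->
  a2 * a3 = b2 * b3 -> a2 * a4 = b2 * b4 -> a3 * a4 = b3 * b4 ->
  (b1 = a1 /\ b2 = a2 /\ b3 = a3 /\ b4 = a4) \/
  (b1 = - a1 /\ b2 = - a2 /\ b3 = - a3 /\ b4 = - a4).
Proof.
  intros N H11 H22 H33 H44 H12 H13 H14 H23 H24 H34.
  assert (sq : forall x y, x * x = y * y -> y = x \/ y = - x).
  { intros x y E. assert (Hxy : (y - x) * (y + x) = 0) by lra.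
    destruct (Rmult_integral _ _ Hxy); [left | right]; lra. }
  assert (cancel : forall a x y, a <> 0 -> a * x = a * y -> x = y).
  { intros a x y Ha E. apply (Rmult_eq_reg_l a); assumption. }
  destruct (Req_dec a1 0) as [Z1 | Z1]; [destruct (Req_dec a2 0) as [Z2 | Z2];
    [destruct (Req_dec a3 0) as [Z3 | Z3]; [destruct (Req_dec a4 0) as [Z4 | Z4] |] |] |].
  - exfalso. subst. lra.
  - destruct (sq _ _ H44) as [-> | ->]; [left | right]; repeat split; try assumption;
      apply (cancel a4); lra.
  - destruct (sq _ _ H33) as [-> | ->]; [left | right]; repeat split; try assumption;
      apply (cancel a3); lra.
  - destruct (sq _ _ H22) as [-> | ->]; [left | right]; repeat split; try assumption;
      apply (cancel a2); lra.
  - destruct (sq _ _ H11) as [-> | ->]; [left | right]; repeat split; try assumption;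
      apply (cancel a1); lra.
Qed.

Lemma P_neg_id_mul g : P (mat_mul mat_neg_id g) = P g.
Proof.
  apply functional_extensionality. intros [[x1 x2] x3].
  destruct g as [[[a1 a2] [b1 b2]] [[c1 c2] [d1 d2]]]. unfold_C2. split_pairs; ring.
Qed.

(* The images of the coordinate axes under P g are the quadratic monomials in
   the coordinates of g. *)
Lemma P_eq_cases g h : SU2 g -> SU2 h -> P g = P h -> h = g \/ h = mat_mul mat_neg_id g.
Proof.
  intros Hg Hh E.
  destruct (SU2_decomp g Hg) as (a1 & a2 & b1 & b2 & -> & N).
  destruct (SU2_decomp h Hh) as (c1 & c2 & d1 & d2 & -> & N').
  pose proof (f_equal (fun F => F (1, 0, 0)) E) as E1.
  pose proof (f_equal (fun F => F (0, 1, 0)) E) as E2.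
  pose proof (f_equal (fun F => F (0, 0, 1)) E) as E3.
  clear E. cbv beta in E1, E2, E3. unfold_C2. destruct_pair_eqs.
  destruct (vec4_eq_or_opp a1 a2 b1 b2 c1 c2 d1 d2 N)
    as [(-> & -> & -> & ->) | (-> & -> & -> & ->)]; try lra.
  - left. reflexivity.
  - right. split_pairs; ring.
Qed.

Lemma P_eq_iff g h : SU2 g -> SU2 h -> P g = P h <-> h = g \/ h = mat_mul mat_neg_id g.
Proof.
  intros Hg Hh. split; [apply P_eq_cases; assumption|].
  intros [-> | ->]; [reflexivity | symmetry; apply P_neg_id_mul].
Qed.

Lemma card_is_ext {T : Type} (A B : T -> Prop) n :
  (forall x, A x <-> B x) -> card_is A n -> card_is B n.
Proof.
  intros E (l & Hl & Hmem & Hlen). exists l. split; [exact Hl|split; [|exact Hlen]].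
  intro x. rewrite <- E. apply Hmem.
Qed.

Lemma card_is_unique {T : Type} (A : T -> Prop) n m : card_is A n -> card_is A m -> n = m.
Proof.
  intros (l & Hl & Hmem & <-) (l' & Hl' & Hmem' & <-).
  apply Nat.le_antisymm; apply NoDup_incl_length; auto; intros x Hx.
  - apply Hmem', Hmem, Hx.
  - apply Hmem, Hmem', Hx.
Qed.

Lemma card_is_0 {T : Type} (A : T -> Prop) x : card_is A 0 -> ~ A x.
Proof.
  intros (l & _ & Hmem & Hlen) Hx. destruct l; [|discriminate]. apply Hmem in Hx. destruct Hx.
Qed.

Lemma card_is_empty {T : Type} : card_is (fun _ : T => False) 0.
Proof. exists nil. split; [constructor | split; [intro x; split; intros [] | reflexivity]]. Qed.

Lemma card_is_remove {T : Type} (A : T -> Prop) n x : card_is A n -> A x ->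
  exists n', n = S n' /\ card_is (fun y => A y /\ y <> x) n'.
Proof.
  intros (l & Hl & Hmem & <-) Hx.
  apply Hmem in Hx. destruct (in_split x l Hx) as (l1 & l2 & ->).
  exists (length (l1 ++ l2)). split; [rewrite !length_app; simpl; lia|].
  exists (l1 ++ l2). split; [|split; [|reflexivity]].
  - eapply NoDup_remove_1; eauto.
  - pose proof (NoDup_remove_2 _ _ _ Hl) as Hnx. intro y. rewrite Hmem.
    rewrite !in_app_iff. simpl. split.
    + intros [[H | [H | H]] Hyx]; auto. congruence.
    + intros [H | H]; split; auto; intros ->; apply Hnx, in_app_iff; auto.
Qed.

Lemma card_is_add {T : Type} (A : T -> Prop) n y : card_is A n -> ~ A y ->
  card_is (fun x => A x \/ x = y) (S n).
Proof.
  intros (l & Hl & Hmem & <-) Hy. exists (y :: l). split; [|split; [|reflexivity]].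
  - constructor; [rewrite <- Hmem|]; assumption.
  - intro x. rewrite Hmem. simpl. intuition.
Qed.

Lemma card_is_image_inj {T U : Type} (A : T -> Prop) (F : T -> U) n :
  card_is A n -> (forall a a', A a -> A a' -> F a = F a' -> a = a') ->
  card_is (fun b => exists a, A a /\ F a = b) n.
Proof.
  intros (l & Hl & Hmem & <-) Hinj. exists (map F l). split; [|split].
  - apply NoDup_map_NoDup_ForallPairs; [|exact Hl].
    intros a a' Ha Ha'. apply Hinj; apply Hmem; assumption.
  - intro b. rewrite in_map_iff. split.
    + intros (a & Ha & <-). exists a. split; [reflexivity | apply Hmem, Ha].
    + intros (a & <- & Ha). exists a. split; [apply Hmem, Ha | reflexivity].
  - apply length_map.
Qed.

Lemma card_is_range N : card_is (fun j => (j < N)%nat) N.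
Proof.
  exists (seq 0 N). split; [apply seq_NoDup | split; [|apply length_seq]].
  intro j. rewrite in_seq. lia.
Qed.

(* Induction removing a whole fibre {a, s a} of F at each step. *)
Lemma card_is_double_cover {T U : Type} (F : T -> U) (s : T -> T) : forall n (A : T -> Prop),
  card_is A n -> (forall a, A a -> A (s a)) -> (forall a, A a -> s a <> a) ->
  (forall a a', A a -> A a' -> (F a = F a' <-> a' = a \/ a' = s a)) ->
  exists m, card_is (fun b => exists a, A a /\ F a = b) m /\ n = (2 * m)%nat.
Proof.
  intro n. induction n as [n IH] using lt_wf_ind. intros A HA Hs Hfree HF.
  destruct n as [|n].
  - exists 0%nat. split; [|lia]. eapply card_is_ext; [|apply card_is_empty].
    intro b; split; [intros []|]. intros (a & Ha & _). eapply card_is_0; eauto.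
  - assert (Ax : exists x, A x).
    { destruct HA as ([|x l] & _ & Hmem & Hlen); [discriminate|].
      exists x. apply Hmem. left. reflexivity. }
    destruct Ax as [x Ax].
    assert (Fs : forall a, A a -> F (s a) = F a) by (intros; symmetry; apply HF; auto).
    assert (Fx : forall a, A a -> F a = F x -> a = x \/ a = s x)
      by (intros a Ha E; apply HF; auto).
    destruct (card_is_remove A (S n) x HA Ax) as (n1 & E1 & HA1).
    destruct (card_is_remove _ n1 (s x) HA1) as (n2 & E2 & HA2); [split; auto|].
    destruct (IH n2 ltac:(lia) (fun y => (A y /\ y <> x) /\ y <> s x) HA2)
      as (m & Hm & Em).
    + intros a [[Ha Hax] Hasx]. split; [split|]; [auto| |];
        intro E; destruct (Fx a Ha) as [-> | ->]; auto;
        rewrite <- (Fs a Ha), E; [|rewrite Fs]; auto.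
    + intros a [[Ha _] _]; auto.
    + intros a a' [[Ha _] _] [[Ha' _] _]; auto.
    + exists (S m). split; [|lia].
      eapply card_is_ext; [|apply (card_is_add _ m (F x) Hm)].
      * intro b. split.
        -- intros [(a & [[Ha _] _] & <-) | ->]; eauto.
        -- intros (a & Ha & <-).
           destruct (classic (a = x \/ a = s x)) as [[-> | ->] | Hn].
           ++ right; reflexivity.
           ++ right; apply Fs; exact Ax.
           ++ left. exists a. repeat split; auto.
      * intros (a & [[Ha Hax] Hasx] & E). destruct (Fx a Ha E); auto.
Qed.

Lemma card_is_even_of_involution {T : Type} (s : T -> T) n (A : T -> Prop) :
  card_is A n -> (forall a, A a -> A (s a)) -> (forall a, A a -> s (s a) = a) ->
  (forall a, A a -> s a <> a) -> Nat.even n = true.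
Proof.
  intros HA Hs Hss Hfree.
  destruct (card_is_double_cover (fun a y => y = a \/ y = s a) s n A HA Hs Hfree)
    as (m & _ & ->).
  - intros a a' Ha Ha'. split.
    + intro E. assert (Hx : a = a \/ a = s a) by (left; reflexivity).
      apply (f_equal (fun Q => Q a)) in E. cbv beta in E. rewrite E in Hx.
      destruct Hx as [H | H]; [left | right]; rewrite H; [reflexivity | symmetry; apply Hss, Ha'].
    + intros [-> | ->]; [reflexivity|].
      apply functional_extensionality. intro y. apply propositional_extensionality.
      rewrite Hss by exact Ha. tauto.
  - apply Nat.even_mul.
Qed.

Lemma Rlist_min_of_subset (S : R -> Prop) (l : list R) :
  (forall t, S t -> In t l) -> (exists t, S t) -> exists d, S d /\ forall t, S t -> d <= t.
Proof.
  revert S. induction l as [|x l IH]; intros S Hl [t0 Ht0].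
  - destruct (Hl t0 Ht0).
  - destruct (classic (exists t, S t /\ t <> x)) as [Hex | Hno].
    + destruct (IH (fun t => S t /\ t <> x)) as (d & [Sd _] & Hd); [|exact Hex|].
      { intros t [St Htx]. destruct (Hl t St); [congruence | assumption]. }
      destruct (classic (S x)) as [Sx | Nx].
      * exists (Rmin d x). split; [apply Rmin_case; assumption|].
        intros t St. destruct (Req_dec t x) as [-> | Htx]; [apply Rmin_r|].
        apply Rle_trans with d; [apply Rmin_l | apply Hd; split; assumption].
      * exists d. split; [exact Sd|]. intros t St. apply Hd. split; [exact St|].
        intros ->. contradiction.
    + assert (Hx : forall t, S t -> t = x)
        by (intros t St; apply NNPP; intro; apply Hno; eauto).
      exists t0. split; [exact Ht0|]. intros t St. rewrite (Hx t St), (Hx t0 Ht0). lra.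
Qed.

Lemma multiplicity_intro {X : Type} (x : R -> X) T N : (0 < N)%nat ->
  (forall t, x (t + T / INR N) = x t) ->
  (forall s t, t < s < t + T / INR N -> x s <> x t) ->
  multiplicity x T N.
Proof.
  intros HN Hper Hsep. split; [exact HN | split; [exact Hper|]].
  intros s t Hs Ht E. destruct (Rtotal_order s t) as [L | [Z | L]]; [|exact Z|]; exfalso.
  - apply (Hsep t s); [lra | symmetry; exact E].
  - apply (Hsep s t); [lra | exact E].
Qed.

(* For c <= 0 the injectivity clause is vacuous. *)
Lemma multiplicity_rescale {X : Type} (x : R -> X) T N c : 0 < T ->
  multiplicity x T N -> multiplicity (fun t => x (t / c)) (T * c) N.
Proof.
  intros HT (HN & Hper & Hinj). pose proof (lt_0_INR N HN) as HN'.
  split; [exact HN | split].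
  - intro t. destruct (Req_dec c 0) as [-> | Hc].
    + replace (T * 0 / INR N) with 0 by (field; lra). rewrite Rplus_0_r. reflexivity.
    + replace ((t + T * c / INR N) / c) with (t / c + T / INR N) by (field; lra). apply Hper.
  - intros s t Hs Ht E.
    replace (T * c / INR N) with (T / INR N * c) in Hs, Ht by (field; lra).
    assert (Hq : 0 < T / INR N) by (apply Rdiv_lt_0_compat; assumption).
    destruct (Rle_or_lt c 0) as [Hc | Hc]; [nra|].
    assert (Hst : s / c = t / c).
    { apply Hinj; [| |exact E]; split;
        (apply (Rmult_le_reg_r c) || apply (Rmult_lt_reg_r c)); try exact Hc;
        unfold Rdiv; rewrite Rmult_assoc, Rinv_l, ?Rmult_1_r by lra; lra. }
    apply (Rmult_eq_reg_r (/ c)); [exact Hst | apply Rinv_neq_0_compat; lra].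
Qed.

Section FiniteSubgroup.

Variable G : Mat2 -> Prop.
Hypothesis HG : finite_subgroup_SU2 G.

Lemma subgroup_SU2 g : G g -> SU2 g.
Proof. apply HG. Qed.

Lemma subgroup_id : G mat_id.
Proof. apply HG. Qed.

Lemma subgroup_mul g h : G g -> G h -> G (mat_mul g h).
Proof. apply HG. Qed.

Lemma subgroup_adj g : G g -> G (mat_adj g).
Proof.
  intro Hg. destruct HG as (_ & _ & _ & Hinv & _).
  destruct (Hinv g Hg) as (h & Hh & E).
  replace (mat_adj g) with h; [exact Hh|].
  rewrite <- (mat_mul_1l h), <- (SU2_mul_adj_l g (subgroup_SU2 g Hg)).
  rewrite mat_mul_assoc, E. apply mat_mul_1r.
Qed.

Lemma subgroup_pow g n : G g -> G (mat_pow g n).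
Proof.
  intro Hg. induction n as [|n IH]; [exact subgroup_id|]. apply subgroup_mul; assumption.
Qed.

Lemma subgroup_card_even_iff nG : card_is G nG -> Nat.even nG = true <-> G mat_neg_id.
Proof.
  intro HnG. split.
  - intro Hev. apply NNPP. intro Hn.
    destruct (card_is_remove G nG mat_id HnG subgroup_id) as (n' & -> & HA).
    assert (Ev : Nat.even n' = true).
    { apply (card_is_even_of_involution mat_adj n' _ HA).
      - intros a [Ha Hai]. split; [apply subgroup_adj, Ha|].
        intro E. apply Hai. rewrite <- (mat_adjK a), E. unfold_C2. split_pairs; ring.
      - intros a _. apply mat_adjK.
      - intros a [Ha Hai] E.
        destruct (SU2_adj_eq_self a (subgroup_SU2 a Ha) E) as [-> | ->]; auto. }
    rewrite Nat.even_succ, <- Nat.negb_even, Ev in Hev. discriminate.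
  - intro Hneg.
    destruct (card_is_double_cover P (mat_mul mat_neg_id) nG G HnG) as (m & _ & ->).
    + intros a Ha. apply subgroup_mul; assumption.
    + intros a Ha. apply SU2_neg_id_mul_neq, subgroup_SU2, Ha.
    + intros a a' Ha Ha'. apply P_eq_iff; apply subgroup_SU2; assumption.
    + apply Nat.even_mul.
Qed.

Lemma subgroup_P_inj g h : ~ G mat_neg_id -> G g -> G h -> P g = P h -> g = h.
Proof.
  intros Hn Hg Hh E.
  apply P_eq_iff in E as [-> | E]; [reflexivity | |apply subgroup_SU2; assumption..].
  exfalso. apply Hn.
  replace mat_neg_id with (mat_mul h (mat_adj g)).
  - apply subgroup_mul; [|apply subgroup_adj]; assumption.
  - rewrite E, mat_mul_assoc, SU2_mul_adj_r, mat_mul_1r by exact (subgroup_SU2 g Hg).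
    reflexivity.
Qed.

(** * The stabiliser of a Hopf fibre *)

Definition orbit_angle (z : C2) (t : R) : Prop := exists g, G g /\ mat_vec g z = rotC2 t z.

Definition fiber_stab (z : C2) (g : Mat2) : Prop := G g /\ exists t, mat_vec g z = rotC2 t z.

Lemma piG_rotC2_eq z a b : piG G (rotC2 a z) = piG G (rotC2 b z) <-> orbit_angle z (a - b).
Proof.
  split.
  - intro E. assert (Ha : piG G (rotC2 a z) (rotC2 a z))
      by (exists mat_id; rewrite mat_vec_id; split; [exact subgroup_id | reflexivity]).
    rewrite E in Ha. destruct Ha as (g & Hg & Eg). exists g. split; [exact Hg|].
    apply (f_equal (rotC2 (- b))) in Eg. rewrite mat_vec_rotC2, !rotC2_add in Eg.
    rewrite Rplus_opp_l, rotC2_0 in Eg. rewrite <- Eg. f_equal. ring.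
  - intros (g & Hg & Eg).
    assert (Ea : rotC2 a z = mat_vec g (rotC2 b z))
      by (rewrite mat_vec_rotC2, Eg, rotC2_add; f_equal; ring).
    apply functional_extensionality. intro w. apply propositional_extensionality.
    unfold piG. rewrite Ea. split.
    + intros (h & Hh & ->). exists (mat_mul h g).
      split; [apply subgroup_mul; assumption | symmetry; apply mat_vec_mul].
    + intros (h & Hh & ->). exists (mat_mul h (mat_adj g)).
      split; [apply subgroup_mul; [|apply subgroup_adj]; assumption|].
      rewrite mat_vec_mul, SU2_mat_vec_adj by exact (subgroup_SU2 g Hg). reflexivity.
Qed.

Lemma P_fixes_hopf_iff z g : sqnorm2 z = 1 -> G g ->
  P g (hopf z) = hopf z <-> fiber_stab z g.
Proof.
  intros Nz Hg. pose proof (subgroup_SU2 g Hg) as Sg.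
  rewrite hopf_eq_real, P_hopf_real by assumption. split.
  - intro E. split; [exact Hg|].
    apply hopf_real_fiber; [rewrite SU2_sqnorm2| |]; assumption.
  - intros [_ [t ->]]. apply hopf_real_rotC2.
Qed.

Lemma fiber_stab_card_isotropy z nG N hp : sqnorm2 z = 1 -> card_is G nG ->
  card_is (fiber_stab z) N -> card_is (isotropy G (hopf z)) hp ->
  N = (if Nat.even nG then (2 * hp)%nat else hp).
Proof.
  intros Nz HnG HK Hiso.
  assert (HPK : card_is (fun r => exists g, fiber_stab z g /\ P g = r) hp).
  { eapply card_is_ext; [|exact Hiso]. intro r. split.
    - intros (g & Hg & -> & E). exists g. split; [apply P_fixes_hopf_iff|]; auto.
    - intros (g & Kg & <-). exists g. split; [apply Kg|split; [reflexivity|]].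
      apply P_fixes_hopf_iff; [exact Nz | apply Kg | exact Kg]. }
  destruct (Nat.even nG) eqn:Ev.
  - apply (subgroup_card_even_iff nG HnG) in Ev.
    destruct (card_is_double_cover P (mat_mul mat_neg_id) N (fiber_stab z) HK)
      as (m & Hm & ->).
    + intros a [Ha [t Et]]. split; [apply subgroup_mul; assumption|].
      exists (PI + t). rewrite mat_vec_mul, Et, mat_vec_neg_id, rotC2_add. reflexivity.
    + intros a [Ha _]. apply SU2_neg_id_mul_neq, subgroup_SU2, Ha.
    + intros a a' [Ha _] [Ha' _]. apply P_eq_iff; apply subgroup_SU2; assumption.
    + f_equal. exact (card_is_unique _ _ _ Hm HPK).
  - assert (Hn : ~ G mat_neg_id)
      by (rewrite <- (subgroup_card_even_iff nG HnG), Ev; discriminate).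
    apply (card_is_unique (fun r => exists g, fiber_stab z g /\ P g = r)); [|exact HPK].
    apply card_is_image_inj; [exact HK|].
    intros a a' [Ha _] [Ha' _]. apply subgroup_P_inj; assumption.
Qed.

Section OrbitAngles.

Variable z : C2.
Hypothesis Nz : sqnorm2 z = 1.

Lemma orbit_angle_0 : orbit_angle z 0.
Proof. exists mat_id. rewrite mat_vec_id, rotC2_0. split; [exact subgroup_id | reflexivity]. Qed.

Lemma orbit_angle_add a b : orbit_angle z a -> orbit_angle z b -> orbit_angle z (a + b).
Proof.
  intros (g & Hg & Eg) (h & Hh & Eh). exists (mat_mul g h).
  split; [apply subgroup_mul; assumption|].
  rewrite mat_vec_mul, Eh, mat_vec_rotC2, Eg, rotC2_add, Rplus_comm. reflexivity.
Qed.

Lemma orbit_angle_opp a : orbit_angle z a -> orbit_angle z (- a).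
Proof.
  intros (g & Hg & Eg). exists (mat_adj g). split; [apply subgroup_adj, Hg|].
  pose proof (SU2_mat_vec_adj g z (subgroup_SU2 g Hg)) as E.
  rewrite Eg, mat_vec_rotC2 in E. rewrite <- E at 2.
  rewrite rotC2_add, Rplus_opp_l, rotC2_0. reflexivity.
Qed.

Lemma orbit_angle_IZR_mul k a : orbit_angle z a -> orbit_angle z (IZR k * a).
Proof.
  intro Ha. induction k as [|k IH|k IH] using Z.peano_ind.
  - rewrite Rmult_0_l. exact orbit_angle_0.
  - rewrite succ_IZR, Rmult_plus_distr_r, Rmult_1_l. apply orbit_angle_add; assumption.
  - rewrite <- Z.sub_1_r, minus_IZR, Rmult_minus_distr_r, Rmult_1_l.
    apply orbit_angle_add, orbit_angle_opp; assumption.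
Qed.

Lemma orbit_angle_2PI : orbit_angle z (2 * PI).
Proof.
  exists mat_id. split; [exact subgroup_id|].
  rewrite mat_vec_id, <- (Rplus_0_l (2 * PI)), <- (Rmult_1_l (2 * PI)).
  rewrite rotC2_add_2PI_mul, rotC2_0. reflexivity.
Qed.

(* Each g contributes at most one angle in (0, 2 pi], so these angles lie in a
   finite list, built by choosing one angle per element of G. *)
Lemma orbit_angle_generator : exists d gd,
  0 < d <= 2 * PI /\ G gd /\ mat_vec gd z = rotC2 d z /\
  forall t, 0 < t <= 2 * PI -> orbit_angle z t -> d <= t.
Proof.
  destruct HG as (_ & _ & _ & _ & _ & lG & _ & HlG & _).
  pose (angle_in g t := 0 < t <= 2 * PI /\ mat_vec g z = rotC2 t z).
  pose (choose_angle g := epsilon (inhabits 0) (angle_in g)).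
  destruct (Rlist_min_of_subset (fun t => 0 < t <= 2 * PI /\ orbit_angle z t)
              (map choose_angle lG)) as (d & [Hd (gd & Hgd & Egd)] & Hmin).
  - intros t [Ht (g & Hg & Eg)]. apply in_map_iff. exists g. split; [|apply HlG, Hg].
    assert (Hc : angle_in g (choose_angle g))
      by (apply epsilon_spec; exists t; split; assumption).
    destruct Hc as [Hc Ec]. apply (rotC2_inj_near _ _ z Nz); [|rewrite <- Ec; exact Eg].
    apply Rabs_def1; lra.
  - exists (2 * PI). pose proof PI_RGT_0. split; [lra | exact orbit_angle_2PI].
  - exists d, gd. repeat split; try tauto. intros t Ht At. apply Hmin. split; assumption.
Qed.

Lemma orbit_angle_multiple d :
  0 < d <= 2 * PI -> orbit_angle z d ->
  (forall t, 0 < t <= 2 * PI -> orbit_angle z t -> d <= t) ->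
  forall t, orbit_angle z t -> exists k, t = IZR k * d.
Proof.
  intros [Hd0 Hd2] Ad Hmin t At.
  set (k := Int_part (t / d)). destruct (base_Int_part (t / d)) as [B1 B2]. fold k in B1, B2.
  exists k.
  assert (Hr : orbit_angle z (t - IZR k * d)).
  { unfold Rminus. rewrite Ropp_mult_distr_l, <- opp_IZR.
    apply orbit_angle_add, orbit_angle_IZR_mul; assumption. }
  assert (Hr0 : 0 <= t - IZR k * d).
  { apply (Rmult_le_compat_r d) in B1; [|lra].
    replace (t / d * d) with t in B1 by (field; lra). lra. }
  assert (Hr1 : t - IZR k * d < d).
  { assert (Hkd : t / d < IZR k + 1) by lra. apply (Rmult_lt_compat_r d) in Hkd; [|lra].
    replace (t / d * d) with t in Hkd by (field; lra). lra. }
  destruct (Req_dec (t - IZR k * d) 0) as [Z | NZ]; [lra|].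
  assert (d <= t - IZR k * d) by (apply Hmin; [split; lra | exact Hr]). lra.
Qed.

(* The stabiliser is cyclic, generated by the element of smallest angle. *)
Lemma fiber_stab_card d gd N :
  0 < d -> G gd -> mat_vec gd z = rotC2 d z -> INR N * d = 2 * PI ->
  (forall t, orbit_angle z t -> exists k, t = IZR k * d) ->
  card_is (fiber_stab z) N.
Proof.
  intros Hd Hgd Egd HNd Hmult.
  assert (HN : 0 < INR N) by (pose proof PI_RGT_0; nra).
  eapply card_is_ext; [|apply (card_is_image_inj _ (mat_pow gd) N (card_is_range N))].
  - intro g. split.
    + intros (j & Hj & <-). split; [apply subgroup_pow, Hgd|].
      exists (INR j * d). apply mat_vec_pow, Egd.
    + intros [Hg [t Et]].
      destruct (Hmult t (ex_intro _ g (conj Hg Et))) as [k ->].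
      assert (HN0 : (0 < Z.of_nat N)%Z) by (apply lt_IZR; rewrite <- INR_IZR_INZ; exact HN).
      destruct (Z.mod_pos_bound k (Z.of_nat N) HN0) as [M1 M2].
      set (j := Z.to_nat (k mod Z.of_nat N)).
      assert (Hj : INR j = IZR (k mod Z.of_nat N))
        by (unfold j; rewrite INR_IZR_INZ, Z2Nat.id; [reflexivity | exact M1]).
      exists j. split; [apply INR_lt; rewrite Hj, INR_IZR_INZ; apply IZR_lt; exact M2|].
      apply (SU2_action_free _ _ z); [apply subgroup_SU2, subgroup_pow, Hgd
                                     | apply subgroup_SU2, Hg | exact Nz|].
      rewrite (mat_vec_pow _ d), Et, Hj by exact Egd.
      symmetry. apply rotC2_IZR_mul_mod; [exact HN0 | rewrite <- INR_IZR_INZ; exact HNd].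
  - intros j j' Hj Hj' E.
    apply INR_eq, (Rmult_eq_reg_r d); [|lra].
    apply (rotC2_inj_near _ _ z Nz).
    + apply lt_INR in Hj, Hj'. pose proof (pos_INR j). pose proof (pos_INR j').
      apply Rabs_def1; nra.
    + rewrite <- !(mat_vec_pow gd d z) by exact Egd. rewrite E. reflexivity.
Qed.

Lemma fiber_orbit_multiplicity : exists N, card_is (fiber_stab z) N /\
  multiplicity (fun t => piG G (rotC2 t z)) (2 * PI) N.
Proof.
  destruct orbit_angle_generator as (d & gd & Hd & Hgd & Egd & Hmin).
  assert (Ad : orbit_angle z d) by (exists gd; split; assumption).
  pose proof (orbit_angle_multiple d Hd Ad Hmin) as Hmult.
  destruct (Hmult (2 * PI) orbit_angle_2PI) as [k Hk].
  pose proof PI_RGT_0.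
  assert (Hk0 : (0 < k)%Z) by (apply lt_IZR; nra).
  set (N := Z.to_nat k).
  assert (HN : INR N = IZR k) by (unfold N; rewrite INR_IZR_INZ, Z2Nat.id; [reflexivity | lia]).
  assert (HNd : 2 * PI / INR N = d) by (rewrite HN, Hk; field; apply not_0_IZR; lia).
  exists N. split.
  - apply (fiber_stab_card d gd); try tauto. rewrite HN. lra.
  - apply multiplicity_intro; [lia | |].
    + intro t. apply piG_rotC2_eq. rewrite HNd. replace (t + d - t) with d by ring. exact Ad.
    + intros s t Hst E. apply piG_rotC2_eq, Hmult in E as [m Hm]. rewrite HNd in Hst.
      assert (Hm0 : (0 < m)%Z) by (apply lt_IZR; nra).
      assert (Hm1 : (m < 1)%Z) by (apply lt_IZR; nra).
      lia.
Qed.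

End OrbitAngles.

End FiniteSubgroup.

Theorem lemma3p14 :
  forall (G : Mat2 -> Prop) (nG : nat) (f : R3 -> R),
    finite_subgroup_SU2 G ->
    card_is G nG -> (nG > 1)%nat ->
    (* f is H-invariant *)
    (forall g q, G g -> sphere2 q -> f (P g q) = f q) ->
    (* the critical set of f equals Fix(H) *)
    (forall q, sphere2 q -> (sphere_critical f q <-> FixH G q)) ->
    exists eps0 : R, eps0 > 0 /\
    forall eps : R, 0 < eps < eps0 ->
    forall (p : R3) (z : C2) (hp : nat),
      sphere_critical f p ->
      cunit_sphere z -> hopf z = p ->
      card_is (isotropy G p) hp ->
      let c := 1 + eps * f p in
      multiplicity (fun t => piG G (rotC2 (t / c) z)) (2 * PI * c)
        (if Nat.even nG then (2 * hp)%nat else hp).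
Proof.
  intros G nG f HG HnG _ _ _. exists 1. split; [lra|].
  intros eps _ p z hp _ Hz <- Hiso c.
  pose proof (unit_sqnorm2 z Hz) as Nz.
  destruct (fiber_orbit_multiplicity G HG z Nz) as (N & HK & Hmult).
  rewrite <- (fiber_stab_card_isotropy G HG z nG N hp Nz HnG HK Hiso).
  apply (multiplicity_rescale (fun t => piG G (rotC2 t z))); [|exact Hmult].
  pose proof PI_RGT_0. lra.
Qed.
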